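(* Let $(U,\Phi)$ be a translation-invariant quantum walk with an initial state $\Phi\in\mathcal H_0$. Then $(U,\Phi)$ is unitary equivalent to $(U_r,\Phi_{\alpha,\theta})$ for some $0\le r,\alpha\le1$ and $\theta\in\mathbb R$, where \[ U_r=\sum_{n\in\mathbb Z}|e_1^{n-1}\rangle\langle re_1^n+se_2^n|+|e_2^{n+1}\rangle\langle -se_1^n+re_2^n|,\quad s=\sqrt{1-r^2}, \] and $\Phi_{\alpha,\theta}=\alpha e_1^0+e^{i\theta}\sqrt{1-\alpha^2}\,e_2^0$. Moreover, for $0<r,r',\alpha,\alpha'<1$ and $\theta,\theta'\in[0,2\pi)$, $(U_r,\Phi_{\alpha,\theta})$ and $(U_{r'},\Phi_{\alpha',\theta'})$ are unitary equivalent if and only if $r=r'$, $\alpha=\alpha'$ and $\theta=\theta'$.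
   Context: Let $\mathcal H_n=\mathbb C^2$ for $n\in\mathbb Z$, $\mathcal H=\bigoplus_{n\in\mathbb Z}\mathcal H_n$, $P_n$ the orthogonal projection onto $\mathcal H_n$, and $\{e_1^n,e_2^n\}$ the standard basis of $\mathcal H_n$; each $\mathcal H_n$ is identified with $\mathbb C^2$. Dirac notation: $|x\rangle\langle y|$ is the operator $z\mapsto\langle y,z\rangle x$ (inner product conjugate-linear in the first argument). A one-dimensional quantum walk is a unitary $U$ on $\mathcal H$ with $\operatorname{rank}(P_nUP_m)=1$ if $m=n\pm1$ and $0$ otherwise. Every such $U$ can be written as $U=\sum_{n\in\mathbb Z}|\xi_{n-1,n}\rangle\langle\zeta_{n-1,n}|+|\xi_{n+1,n}\rangle\langle\zeta_{n+1,n}|$, where $\{\xi_{n,n+1},\xi_{n+1,n}\}_{n}$ and $\{\zeta_{n,n+1},\zeta_{n+1,n}\}_{n}$ are orthonormal bases of $\mathcal H$ with $\xi_{n,n+1},\zeta_{n+1,n}\in\mathcal H_n$ and $\xi_{n+1,n},\zeta_{n,n+1}\in\mathcal H_{n+1}$. $U$ is translation-invariant if it has such a representation for which there exist $\xi_1,\xi_2,\zeta_1,\zeta_2\in\mathbb C^2$ with $\xi_{n,n+1}=\xi_1$, $\xi_{n,n-1}=\xi_2$, $\zeta_{n-1,n}=\zeta_1$, $\zeta_{n+1,n}=\zeta_2$ for all $n\in\mathbb Z$. An initial state is a unit vector $\Phi\in\mathcal H_0$. Since a walk $U$ is identified with $e^{i\lambda}U$ and a state $\Phi$ with $e^{i\lambda}\Phi$,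 pairs $(U,\Phi)$ and $(U',\Phi')$ are called unitary equivalent if there exist $\lambda,\lambda'\in\mathbb R$ and a unitary $W=\bigoplus_nW_n$ ($W_n$ unitary on $\mathcal H_n$) with $e^{i\lambda}WUW^*=U'$ and $e^{i\lambda'}W\Phi=\Phi'$. *)

From mathcomp Require Import all_boot all_algebra complex.
From mathcomp Require Import reals trigo.
Set Implicit Arguments. Unset Strict Implicit. Unset Printing Implicit Defensive.
Import GRing.Theory Num.Theory ComplexField.
Local Open Scope complex_scope.
Local Open Scope ring_scope.

Section QW.
Variable R : realType.
Local Notation C := (R[i]).

(* A (banded) operator on H = ⊕_{n∈Z} C^2, given by its blocks
   U n m = P_n U P_m : H_m -> H_n, each identified with a 2x2 matrix. *)
Definition kernel := int -> int -> 'M[C]_2.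

Definition adjm (m n : nat) (A : 'M[C]_(m, n)) : 'M[C]_(n, m) :=
  \matrix_(i, j) (A j i)^*.

Definition inner (x y : 'cV[C]_2) : C := (adjm x *m y) 0 0.

Definition dirac (x y : 'cV[C]_2) : 'M[C]_2 := x *m adjm y.

Definition e1 : 'cV[C]_2 := delta_mx 0 0.
Definition e2 : 'cV[C]_2 := delta_mx 1 0.

Definition expi (t : R) : C := (cos t +i* sin t)%C.

Definition unitvec (x : 'cV[C]_2) : Prop := inner x x = 1.

Definition onb (x y : 'cV[C]_2) : Prop :=
  inner x x = 1 /\ inner y y = 1 /\ inner x y = 0.

(* Since only the blocks with |n-m| = 1 are nonzero, the
   block entries of U^* U and U U^* are the finite sums below (exactly). *)
Definition isQW (U : kernel) : Prop :=
  (forall n m : int,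
      \rank (U n m) = if (m == n + 1) || (m == n - 1) then 1%N else 0%N) /\
  (forall n m : int,
      \sum_(k <- [:: n - 1; n; n + 1]) adjm (U k n) *m U k m
      = if n == m then 1%:M else 0) /\
  (forall n m : int,
      \sum_(k <- [:: n - 1; n; n + 1]) U n k *m adjm (U m k)
      = if n == m then 1%:M else 0).

(* The walk  sum_n |xi1^{n-1}><zeta1^n| + |xi2^{n+1}><zeta2^n| :
   block (n-1, n) is |xi1><zeta1|, block (n+1, n) is |xi2><zeta2|. *)
Definition TIwalk (xi1 zeta1 xi2 zeta2 : 'cV[C]_2) : kernel :=
  fun n m => if m == n + 1 then dirac xi1 zeta1
             else if m == n - 1 then dirac xi2 zeta2 else 0.

Definition isTI (U : kernel) : Prop :=
  isQW U /\
  exists xi1 xi2 zeta1 zeta2 : 'cV[C]_2,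
    onb xi1 xi2 /\ onb zeta1 zeta2 /\
    forall n m, U n m = TIwalk xi1 zeta1 xi2 zeta2 n m.

Definition ueq (U : kernel) (Phi : 'cV[C]_2) (U' : kernel) (Phi' : 'cV[C]_2)
  : Prop :=
  exists (l l' : R) (W : int -> 'M[C]_2),
    (forall n, adjm (W n) *m W n = 1%:M /\ W n *m adjm (W n) = 1%:M) /\
    (forall n m, expi l *: (W n *m U n m *m adjm (W m)) = U' n m) /\
    expi l' *: (W 0 *m Phi) = Phi'.

Definition Ur (r : R) : kernel :=
  let s := Num.sqrt (1 - r ^+ 2) in
  TIwalk e1 (r%:C *: e1 + s%:C *: e2) e2 (- s%:C *: e1 + r%:C *: e2).

Definition Phi_at (a t : R) : 'cV[C]_2 :=
  a%:C *: e1 + (expi t * (Num.sqrt (1 - a ^+ 2))%:C) *: e2.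

End QW.

(* A gauge W_n = e^{i n b} G, with G a fixed unitary, maps the translation-invariant walk
   built from (xi1, zeta1, xi2, zeta2) to the one built from G xi1, G zeta1, G xi2, G zeta2, up to
   the phases e^{-i b} and e^{i b} on the two kinds of jumps.  In the frame (xi1, xi2) the
   coordinates of zeta1 are (r e^{i tp}, s e^{i tq}) with r^2 + s^2 = 1, and unitarity forces
   those of zeta2 to be e^{2ic} (- s e^{-i tq}, r e^{-i tp}); rephasing xi2 and choosing b makes
   both coin vectors real, which is U_r, and what is left of the phases of Phi is theta.
   Conversely, a unitary equivalence multiplies tr (U_01 U_10) and <Phi, U_01 U_10 Phi> by the
   same unimodular factor and fixes <Phi, U_01 U_01^* Phi>.  For (U_r, Phi_{a,theta}) these are
   -s^2, s a (r b e^{i theta} - s a) and a^2 (b = sqrt (1 - a^2)), from which r, a and theta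
   are recovered. *)

From mathcomp Require Import all_boot all_order all_algebra complex.
From mathcomp Require Import reals trigo.
From mathcomp Require Import ring lra.
Set Implicit Arguments. Unset Strict Implicit. Unset Printing Implicit Defensive.
Import Order.TTheory GRing.Theory Num.Theory.
Local Open Scope complex_scope.
Local Open Scope ring_scope.

Section QuantumWalks.
Variable R : realType.
Local Notation C := R[i].
Local Notation col2 a b := (a *: e1 R + b *: e2 R).
Implicit Types (a b k : C) (x y u v w : 'cV[C]_2) (A B : 'M[C]_2).

(* The generic rmorph lemmas leave the conjugation in a shape that conjCK no longer matches. *)
Lemma conjCD (k z : C) : (k + z)^* = k^* + z^*. Proof. exact: rmorphD. Qed.
Lemma conjCN k : (- k)^* = - k^*. Proof. exact: rmorphN. Qed.
Lemma conjCM (k z : C) : (k * z)^* = k^* * z^*. Proof. exact: rmorphM. Qed.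
Lemma conjCV k : (k^-1)^* = (k^*)^-1. Proof. exact: fmorphV. Qed.

Lemma conjC_real (x : R) : (x%:C)^* = x%:C. Proof. exact: conjc_real. Qed.

Lemma sum2 (F : 'I_2 -> C) : \sum_i F i = F 0 + F 1.
Proof. by rewrite big_ord_recl big_ord1; congr (_ + F _); apply: val_inj. Qed.

Lemma col2_0 a b : (col2 a b) 0 0 = a.
Proof. by rewrite !mxE /= mulr1 mulr0 addr0. Qed.

Lemma col2_1 a b : (col2 a b) 1 0 = b.
Proof. by rewrite !mxE /= mulr1 mulr0 add0r. Qed.

Lemma col2_e1 : col2 1 0 = e1 R.
Proof. by rewrite scale1r scale0r addr0. Qed.

Lemma col2_e2 : col2 0 1 = e2 R.
Proof. by rewrite scale1r scale0r add0r. Qed.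

Lemma col2_eq a b a' b' : a = a' -> b = b' -> col2 a b = col2 a' b'.
Proof. by move=> -> ->. Qed.

Lemma cV2E v : v = col2 (v 0 0) (v 1 0).
Proof.
apply/matrixP => i j; rewrite (ord1 j) !mxE /=.
by case: i => [[|[|//]] ?] /=; rewrite ?mulr1 ?mulr0 ?addr0 ?add0r; congr (v _ _); apply: val_inj.
Qed.

Lemma scale_col2 k a b : k *: col2 a b = col2 (k * a) (k * b).
Proof. by rewrite scalerDr !scalerA. Qed.

Lemma innerE x y : inner x y = (x 0 0)^* * y 0 0 + (x 1 0)^* * y 1 0.
Proof. by rewrite /inner !mxE sum2 !mxE. Qed.

Lemma inner_col2 a b a' b' : inner (col2 a b) (col2 a' b') = a^* * a' + b^* * b'.
Proof. by rewrite innerE !col2_0 !col2_1. Qed.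

Lemma conj_inner x y : (inner x y)^* = inner y x.
Proof. by rewrite !innerE conjCD !conjCM !conjCK mulrC [_ * (y 1 0)^*]mulrC. Qed.

Lemma innerZl k x y : inner (k *: x) y = k^* * inner x y.
Proof. by rewrite !innerE !mxE !conjCM; ring. Qed.

Lemma innerZr k x y : inner x (k *: y) = k * inner x y.
Proof. by rewrite !innerE !mxE; ring. Qed.

Lemma adjmM m n p (A : 'M[C]_(m, n)) (B : 'M[C]_(n, p)) :
  adjm (A *m B) = adjm B *m adjm A.
Proof.
apply/matrixP => i j; rewrite !mxE (big_morph _ conjCD (conjC0 _)).
by apply: eq_bigr => k _; rewrite !mxE conjCM mulrC.
Qed.

Lemma adjmK m n (A : 'M[C]_(m, n)) : adjm (adjm A) = A.
Proof. by apply/matrixP => i j; rewrite !mxE conjCK. Qed.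

Lemma adjmZ m n k (A : 'M[C]_(m, n)) : adjm (k *: A) = k^* *: adjm A.
Proof. by apply/matrixP => i j; rewrite !mxE conjCM. Qed.

Lemma adjm1 : adjm (1%:M : 'M[C]_2) = 1%:M.
Proof. by apply/matrixP => i j; rewrite !mxE conjC_nat eq_sym. Qed.

Lemma inner_adjm A x y : inner x (A *m y) = inner (adjm A *m x) y.
Proof. by rewrite /inner adjmM adjmK mulmxA. Qed.

Definition unitary A := adjm A *m A = 1%:M.

Lemma unitary_mulmx_adj A : unitary A -> A *m adjm A = 1%:M.
Proof. exact: mulmx1C. Qed.

Lemma unitaryZ k A : k * k^* = 1 -> unitary A -> unitary (k *: A).
Proof.
by move=> k1 UA; rewrite /unitary adjmZ -scalemxAl -scalemxAr UA scalerA mulrC k1 scale1r.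
Qed.

Lemma inner_unitary A x y : unitary A -> inner (A *m x) (A *m y) = inner x y.
Proof. by move=> UA; rewrite inner_adjm mulmxA UA mul1mx. Qed.

Lemma dirac_conj A B x y : A *m dirac x y *m adjm B = dirac (A *m x) (B *m y).
Proof. by rewrite /dirac adjmM !mulmxA. Qed.

Lemma dirac_scale a b x y : dirac (a *: x) (b *: y) = (a * b^*) *: dirac x y.
Proof. by rewrite /dirac adjmZ -scalemxAl -scalemxAr scalerA. Qed.

Lemma dirac_scalel k x y : dirac (k *: x) y = k *: dirac x y.
Proof. by rewrite /dirac -scalemxAl. Qed.

Lemma dirac_scaler k x y : k *: dirac x y = dirac x (k^* *: y).
Proof. by rewrite /dirac adjmZ conjCK -scalemxAr. Qed.

Lemma dirac_mul x y u v : dirac x y *m dirac u v = inner y u *: dirac x v.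
Proof.
rewrite /dirac mulmxA -(mulmxA x) [adjm y *m u]mx11_scalar -/(inner y u).
by rewrite mul_mx_scalar -scalemxAl.
Qed.

Lemma adjm_dirac x y : adjm (dirac x y) = dirac y x.
Proof. by rewrite /dirac adjmM adjmK. Qed.

Lemma mxtrace_dirac x y : \tr (dirac x y) = inner y x.
Proof. by rewrite /dirac mxtrace_mulC trace_mx11. Qed.

Definition expect x A := inner x (A *m x).

Lemma expect_dirac w x y : expect w (dirac x y) = inner w x * inner y w.
Proof.
by rewrite /expect /dirac -mulmxA [adjm y *m w]mx11_scalar mul_mx_scalar innerZr mulrC.
Qed.

Lemma expectZ w k A : expect w (k *: A) = k * expect w A.
Proof. by rewrite /expect -scalemxAl innerZr. Qed.

Lemma mxtrace_unitary_conj W A : unitary W -> \tr (W *m A *m adjm W) = \tr A.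
Proof. by move=> UW; rewrite mxtrace_mulC mulmxA UW mul1mx. Qed.

Lemma expect_unitary_conj W A w k : unitary W -> k * k^* = 1 ->
  expect (k *: (W *m w)) (W *m A *m adjm W) = expect w A.
Proof.
move=> UW k1; rewrite /expect -scalemxAr innerZl innerZr mulrA [_ * k]mulrC k1 mul1r.
by rewrite -!mulmxA (mulmxA (adjm W)) UW mul1mx inner_unitary.
Qed.

Lemma ord2P (i : 'I_2) : i = 0 \/ i = 1.
Proof. by case: i => [[|[|//]] ?]; [left | right]; apply: val_inj. Qed.

Definition frame x y : 'M[C]_2 := \matrix_(i, j) ((if i == 0 then x else y) j 0)^*.

Lemma frameE x y v : frame x y *m v = col2 (inner x v) (inner y v).
Proof. by rewrite [LHS]cV2E !mxE !sum2 !mxE /= !innerE. Qed.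

Lemma frame_unitary x y : onb x y -> unitary (frame x y).
Proof.
move=> [xx [yy xy]]; apply: mulmx1C; apply/matrixP => i j.
have yx : inner y x = 0 by rewrite -conj_inner xy conjC0.
rewrite !mxE sum2 !mxE !conjCK -!innerE.
by case: (ord2P i) => ->; case: (ord2P j) => ->.
Qed.

Lemma parseval x y : onb x y -> forall u v,
  inner u v = (inner x u)^* * inner x v + (inner y u)^* * inner y v.
Proof. by move/frame_unitary/inner_unitary => xy u v; rewrite -xy !frameE inner_col2. Qed.

Lemma expiD (s t : R) : expi (s + t) = expi s * expi t.
Proof.
rewrite /expi cosD sinD; apply/eqP; rewrite eq_complex /=.
by apply/andP; split; apply/eqP; ring.
Qed.

Lemma expi0 : expi 0 = 1 :> C.
Proof. by rewrite /expi cos0 sin0. Qed.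

Lemma conj_expi (t : R) : (expi t)^* = expi (- t).
Proof. by rewrite /expi cosN sinN. Qed.

Lemma expi_unitary (t : R) : expi t * (expi t)^* = 1.
Proof. by rewrite conj_expi -expiD subrr expi0. Qed.

Lemma norm_expi (t : R) : `|expi t| = 1.
Proof.
have /eqP := normCK (expi t); rewrite expi_unitary sqrf_eq1 => /orP[/eqP //|/eqP e].
by have := normr_ge0 (expi t); rewrite e ler0N1.
Qed.

Lemma expi_neq0 (t : R) : expi t != 0.
Proof. by apply: contra_eq_neq (expi_unitary t) => ->; rewrite mul0r eq_sym oner_neq0. Qed.

Lemma expiN (t : R) : expi (- t) = (expi t)^-1.
Proof. by apply: (mulfI (expi_neq0 t)); rewrite -expiD subrr expi0 divff ?expi_neq0. Qed.

Lemma expi_surj (z : C) : z * z^* = 1 -> exists t : R, expi t = z.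
Proof.
case: z => a b /eqP; rewrite eq_complex /= => /andP[/eqP ab1 _].
have a2b2 : a ^+ 2 + b ^+ 2 = 1 by rewrite -ab1; ring.
have a_bnd : -1 <= a <= 1 by apply/andP; split; nra.
have sin_a : Num.sqrt (1 - a ^+ 2) = `|b| by rewrite -a2b2 addrC addKr sqrtr_sqr.
have acosK' : cos (acos a) = a by rewrite acosK // in_itv.
case: (lerP 0 b) => b0.
- by exists (acos a); rewrite /expi sin_acos // sin_a ger0_norm // acosK'.
- by exists (- acos a); rewrite /expi cosN sinN sin_acos // sin_a ltr0_norm // opprK acosK'.
Qed.

Lemma sin_eq0_small (h : R) : - pi < h < pi -> sin h = 0 -> h = 0.
Proof.
move=> /andP[h_gt h_lt] sh0; case: (ltrgtP h 0) => // [h_neg | h_pos].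
- have : 0 < sin (- h) by apply: sin_gt0_pi; apply/andP; split; lra.
  rewrite sinN sh0 oppr0; lra.
- have : 0 < sin h by apply: sin_gt0_pi; apply/andP; split.
  rewrite sh0; lra.
Qed.

Lemma expi_inj (t t' : R) : 0 <= t < 2 * pi -> 0 <= t' < 2 * pi ->
  expi t = expi t' -> t = t'.
Proof.
move=> /andP[t0 t1] /andP[t0' t1'] /eqP; rewrite eq_complex /= => /andP[/eqP ec /eqP es].
pose h := (t - t') / 2.
have cos_d : cos (h + h) = 1.
  by rewrite -splitr cosB ec es -!expr2 cos2Dsin2.
have sh0 : sin h = 0.
  move: cos_d; rewrite cosD -!expr2; have := cos2Dsin2 h; nra.
suff : h = 0 by rewrite /h => /eqP; rewrite mulf_eq0 subr_eq0 invr_eq0 pnatr_eq0 orbF => /eqP.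
by apply: sin_eq0_small => //; rewrite /h; apply/andP; split; lra.
Qed.

Lemma polarC (z : C) : exists (r t : R), 0 <= r /\ z = r%:C * expi t.
Proof.
have [->|z0] := eqVneq z 0; first by exists 0, 0; rewrite mul0r.
have nz0 : `|z| != 0 by rewrite normr_eq0.
have [t et] : exists t : R, expi t = z / `|z|.
  apply: expi_surj; rewrite conjCM conjCV conj_normC.
  by rewrite mulrACA -invfM -normCK divff // expf_neq0.
have [r r0 rE] : exists2 r : R, 0 <= r & `|z| = r%:C.
  by eexists; last exact: normc_def; apply: sqrtr_ge0.
by exists r, t; rewrite et -rE mulrC divfK.
Qed.

Lemma unitary2_second_column (p q p' q' : C) :
  p^* * p + q^* * q = 1 -> p'^* * p' + q'^* * q' = 1 -> p^* * p' + q^* * q' = 0 ->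
  exists m : R, p' = - (expi m * q^*) /\ q' = expi m * p^*.
Proof.
move=> n1 n2 o12; pose d := p * q' - q * p'.
have q'E : q' = d * p^*.
  apply/eqP; rewrite -subr_eq0; apply/eqP.
  transitivity (q' * (1 - (p^* * p + q^* * q)) + q * (p^* * p' + q^* * q')).
    by rewrite /d; ring.
  by rewrite n1 o12; ring.
have p'E : p' = - (d * q^*).
  apply/eqP; rewrite -subr_eq0; apply/eqP.
  transitivity (p' * (1 - (p^* * p + q^* * q)) + p * (p^* * p' + q^* * q')).
    by rewrite /d; ring.
  by rewrite n1 o12; ring.
have [m dE] : exists m : R, expi m = d.
  apply: expi_surj; rewrite -n2 -[d * _]mulr1 -n1 p'E q'E !conjCN !conjCM !conjCK.
  by ring.
by exists m; rewrite dE.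
Qed.

Lemma polar_unit_pair (z w : C) : z^* * z + w^* * w = 1 ->
  exists r s tz tw : R,
    [/\ 0 <= r <= 1, z = r%:C * expi tz, w = s%:C * expi tw & Num.sqrt (1 - r ^+ 2) = s].
Proof.
have [r [tz [r0 ->]]] := polarC z; have [s [tw [s0 ->]]] := polarC w.
have normE (x t : R) : (x%:C * expi t)^* * (x%:C * expi t) = (x ^+ 2)%:C.
  rewrite conjCM conjC_real rmorphXn expr2 -[RHS]mulr1 -(expi_unitary t); ring.
rewrite !normE -rmorphD -[1]/(1%:C) => /complexI rs1.
exists r, s, tz, tw; split => //; first by apply/andP; split; nra.
by rewrite -rs1 addrC addKr sqrtr_sqr ger0_norm.
Qed.

Lemma ueq_TIwalk_gauge (G : 'M[C]_2) (b l l' : R) x1 z1 x2 z2 u x1' z1' x2' z2' u' :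
  unitary G ->
  (expi l * (expi b)^*) *: dirac (G *m x1) (G *m z1) = dirac x1' z1' ->
  (expi l * expi b) *: dirac (G *m x2) (G *m z2) = dirac x2' z2' ->
  expi l' *: (G *m u) = u' ->
  ueq (TIwalk x1 z1 x2 z2) u (TIwalk x1' z1' x2' z2') u'.
Proof.
move=> UG h1 h2 hu; pose W (n : int) := expi (n%:~R * b) *: G.
have UW n : unitary (W n) by apply: unitaryZ (expi_unitary _) UG.
exists l, l', W; split; [by move=> n; split; [exact: UW | exact: unitary_mulmx_adj] | split].
- move=> n m; rewrite /TIwalk; case: eqP => [->|_]; [|case: eqP => [->|_]].
  + rewrite dirac_conj -!scalemxAl dirac_scale scalerA -h1 mulrA !conj_expi -!expiD.
    by congr (expi _ *: _); rewrite intrD; ring.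
  + rewrite dirac_conj -!scalemxAl dirac_scale scalerA -h2 mulrA conj_expi -!expiD.
    by congr (expi _ *: _); rewrite intrB; ring.
  + by rewrite mulmx0 mul0mx scaler0.
- by rewrite -hu /W mul0r expi0 scale1r.
Qed.

Lemma onb_scaler x y (t : R) : onb x y -> onb x (expi t *: y).
Proof.
move=> [xx [yy xy]]; rewrite /onb !innerZl !innerZr xx xy yy mulr0 mulr1.
by rewrite mulrC expi_unitary.
Qed.

Local Ltac expi_field :=
  rewrite ?(conjCM, conjCN, conjC_real, conj_expi, expiD, expiN); field; rewrite ?expi_neq0.

Lemma TIwalk_normal_form xi1 xi2 z1 z2 u :
  onb xi1 xi2 -> onb z1 z2 -> unitvec u ->
  exists r a t : R, 0 <= r <= 1 /\ 0 <= a <= 1 /\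
    ueq (TIwalk xi1 z1 xi2 z2) u (Ur r) (Phi_at a t).
Proof.
move=> xi_onb [+ [+ +]]; rewrite /unitvec !(parseval xi_onb z1) !(parseval xi_onb z2).
rewrite (parseval xi_onb u) => z11 z22 z12 u1.
have [r [s [tp [tq [r01 pE qE sE]]]]] := polar_unit_pair z11.
have [a [a' [tx [ty [a01 xE yE a'E]]]]] := polar_unit_pair u1.
have [m [p'E q'E]] := unitary2_second_column z11 z22 z12.
exists r, a, (tp - tq - tx + ty); split => //; split => //.
have G_unitary := frame_unitary (onb_scaler (tq - tp) xi_onb).
rewrite /Ur /Phi_at sE a'E.
have [x11 [x22 x12]] := xi_onb; have x21 : inner xi2 xi1 = 0 by rewrite -conj_inner x12 conjC0.
have [c mE] : exists c, m = c + c by exists (m / 2); exact: splitr.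
subst m.
apply: (ueq_TIwalk_gauge (b := c - tp) (l := c) (l' := - tx) G_unitary);
  rewrite !frameE !innerZl ?x11 ?x12 ?x21 ?x22 ?mulr0 ?mulr1.
- have -> : col2 (inner xi1 z1) ((expi (tq - tp))^* * inner xi2 z1) = expi tp *: col2 r%:C s%:C.
    by rewrite scale_col2 pE qE; apply: col2_eq; [exact: mulrC | expi_field].
  by rewrite col2_e1 dirac_scaler scalerA (_ : _ * expi tp = 1) ?scale1r //; expi_field.
- have -> : col2 0 (expi (tq - tp))^* = (expi (tq - tp))^* *: e2 R.
    by rewrite scale0r add0r.
  have -> : col2 (inner xi1 z2) ((expi (tq - tp))^* * inner xi2 z2) =
            expi (c + c - tq) *: col2 (- s%:C) r%:C.
    by rewrite scale_col2 p'E q'E pE qE; apply: col2_eq; expi_field.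
  rewrite dirac_scalel scalerA dirac_scaler scalerA.
  by rewrite (_ : _ * expi (c + c - tq) = 1) ?scale1r //; expi_field.
- by rewrite scale_col2 xE yE; apply: col2_eq; expi_field.
Qed.

Lemma ueq_refl U u : ueq U u U u.
Proof.
exists 0, 0, (fun _ => 1%:M); rewrite expi0 adjm1 mulmx1.
by split => [//|]; split => [n m|]; rewrite scale1r ?mul1mx ?mulmx1.
Qed.

Lemma eq_ueq U V u U' u' :
  (forall n m, U n m = V n m) -> ueq V u U' u' -> ueq U u U' u'.
Proof.
move=> UV [l [l' [W [UW [VU' uu']]]]]; exists l, l', W.
by split => //; split => // n m; rewrite UV.
Qed.

Lemma ueq_invariants U u U' u' : ueq U u U' u' ->
  exists2 k : C, `|k| = 1 &
    [/\ \tr (U' 0 1 *m U' 1 0) = k * \tr (U 0 1 *m U 1 0),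
        expect u' (U' 0 1 *m U' 1 0) = k * expect u (U 0 1 *m U 1 0)
      & expect u' (U' 0 1 *m adjm (U' 0 1)) = expect u (U 0 1 *m adjm (U 0 1))].
Proof.
move=> [l [l' [W [UW [UU' <-]]]]].
have W1 : adjm (W 1) *m W 1 = 1%:M := (UW 1).1.
have W0 : unitary (W 0) := (UW 0).1.
have prodE : U' 0 1 *m U' 1 0 = expi l ^+ 2 *: (W 0 *m (U 0 1 *m U 1 0) *m adjm (W 0)).
  rewrite -!UU' -scalemxAl -scalemxAr scalerA -expr2 -!mulmxA.
  by rewrite (mulmxA (adjm (W 1))) W1 mul1mx.
have adjE : U' 0 1 *m adjm (U' 0 1) = W 0 *m (U 0 1 *m adjm (U 0 1)) *m adjm (W 0).
  rewrite -UU' adjmZ !adjmM adjmK -scalemxAl -scalemxAr scalerA expi_unitary scale1r.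
  by rewrite -!mulmxA (mulmxA (adjm (W 1))) W1 mul1mx.
exists (expi l ^+ 2); first by rewrite normrX norm_expi expr1n.
rewrite prodE adjE mxtraceZ expectZ !expect_unitary_conj ?expi_unitary //.
by rewrite mxtrace_unitary_conj.
Qed.

Lemma sqrt_one_minus_sqr (x : R) : 0 < x < 1 ->
  0 < Num.sqrt (1 - x ^+ 2) /\ x ^+ 2 + Num.sqrt (1 - x ^+ 2) ^+ 2 = 1.
Proof.
move=> /andP[x0 x1]; have x2 : 0 < 1 - x ^+ 2 by nra.
by rewrite sqrtr_gt0 x2 sqr_sqrtr; [split => //; ring | exact: ltW].
Qed.

Lemma coin_walk_invariants (r s a b t : R) : r ^+ 2 + s ^+ 2 = 1 ->
  let U := TIwalk (e1 R) (col2 r%:C s%:C) (e2 R) (col2 (- s%:C) r%:C) in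
  let u := col2 a%:C (expi t * b%:C) in
  [/\ \tr (U 0 1 *m U 1 0) = s%:C * - s%:C,
      expect u (U 0 1 *m U 1 0) = s%:C * (a%:C * (- s%:C * a%:C + r%:C * (expi t * b%:C)))
    & expect u (U 0 1 *m adjm (U 0 1)) = a%:C * a%:C].
Proof.
move=> rs1 U u.
have U01 : U 0 1 = dirac (col2 1 0) (col2 r%:C s%:C) by rewrite col2_e1.
have U10 : U 1 0 = dirac (col2 0 1) (col2 (- s%:C) r%:C).
  (* deciding these int tests by conversion alone is very slow *)
  by rewrite col2_e2 /U /TIwalk (_ : (0 == 1 + 1) = false) // (_ : 0 == 1 - 1 :> int) //.
split.
- rewrite U01 U10 dirac_mul mxtraceZ mxtrace_dirac.
  by congr (_ * _); rewrite inner_col2 !(conjCN, conjC_real); ring.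
- rewrite U01 U10 dirac_mul expectZ expect_dirac.
  by congr (_ * (_ * _)); rewrite inner_col2 !(conjCN, conjC_real, conjC1, conjC0); ring.
- rewrite U01 adjm_dirac dirac_mul expectZ expect_dirac -[RHS]mul1r.
  congr (_ * (_ * _)); rewrite inner_col2 !(conjCN, conjC_real, conjC1, conjC0); try ring.
  by rewrite -!expr2 -!rmorphXn -rmorphD rs1.
Qed.

Lemma Ur_Phi_at_ueq_inj (r r' a a' t t' : R) :
  0 < r < 1 -> 0 < r' < 1 -> 0 < a < 1 -> 0 < a' < 1 ->
  0 <= t < 2 * pi -> 0 <= t' < 2 * pi ->
  ueq (Ur r) (Phi_at a t) (Ur r') (Phi_at a' t') -> [/\ r = r', a = a' & t = t'].
Proof.
move=> hr hr' ha ha' t_rng t'_rng /ueq_invariants[k k1 []]; rewrite /Ur /Phi_at /=.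
move: (sqrt_one_minus_sqr ha) (sqrt_one_minus_sqr ha').
move: (sqrt_one_minus_sqr hr) (sqrt_one_minus_sqr hr').
move: (Num.sqrt (1 - r ^+ 2)) (Num.sqrt (1 - r' ^+ 2))
      (Num.sqrt (1 - a ^+ 2)) (Num.sqrt (1 - a' ^+ 2)) => s s' b b'.
move=> [s0 rs] [s0' rs'] [b0 ab] [b0' ab'] tr_eq ex_eq ad_eq.
have [tr1 ex1 ad1] := coin_walk_invariants a b t rs.
have [tr1' ex1' ad1'] := coin_walk_invariants a' b' t' rs'.
have trE : s'%:C * - s'%:C = k * (s%:C * - s%:C) by rewrite -tr1' -tr1.
have exE : s'%:C * (a'%:C * (- s'%:C * a'%:C + r'%:C * (expi t' * b'%:C))) =
       k * (s%:C * (a%:C * (- s%:C * a%:C + r%:C * (expi t * b%:C)))) by rewrite -ex1' -ex1.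
have adE : a'%:C * a'%:C = a%:C * a%:C by rewrite -ad1' -ad1.
case/andP: hr => r0 _; case/andP: hr' => r0' _; case/andP: ha => a0 _; case/andP: ha' => a0' _.
have nz (x : R) : 0 < x -> x%:C != 0 by move=> x0; rewrite fmorph_eq0 gt_eqF.
have aa' : a = a' by move: adE; rewrite -!rmorphM => /complexI; nra.
subst a'; have bb' : b = b' by nra.
subst b'; have ss' : s = s'.
  move: (congr1 Num.norm trE); rewrite !normrM !normrN k1 mul1r !ger0_norm ?ler0c ?ltW //.
  by rewrite -!rmorphM => /complexI; nra.
subst s'; have rr' : r = r' by nra.
subst r'; have k_1 : k = 1.
  have ss_nz : s%:C * - s%:C != 0 by rewrite mulf_neq0 ?oppr_eq0 ?nz.
  by apply: (mulIf ss_nz); rewrite mul1r -trE.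
split => //; apply: expi_inj => //.
move: exE; rewrite k_1 mul1r => /(mulfI (nz _ s0))/(mulfI (nz _ a0))/addrI/(mulfI (nz _ r0)).
by move/(mulIf (nz _ b0)).
Qed.

End QuantumWalks.

Theorem corollary3p3 (R : realType) :
  (forall (U : kernel R) (Phi : 'cV[R[i]]_2),
      isTI U -> unitvec Phi ->
      exists (r a t : R),
        0 <= r <= 1 /\ 0 <= a <= 1 /\ ueq U Phi (Ur r) (Phi_at a t)) /\
  (forall r r' a a' t t' : R,
      0 < r < 1 -> 0 < r' < 1 -> 0 < a < 1 -> 0 < a' < 1 ->
      0 <= t < 2 * pi -> 0 <= t' < 2 * pi ->
      (ueq (Ur r) (Phi_at a t) (Ur r') (Phi_at a' t') <->
       r = r' /\ a = a' /\ t = t')).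
Proof.
split.
  move=> U u [_ [xi1 [xi2 [z1 [z2 [xi_onb [z_onb UE]]]]]]] u1.
  have [r [a [t [r01 [a01 equiv]]]]] := TIwalk_normal_form xi_onb z_onb u1.
  by exists r, a, t; do 2 split => //; apply: eq_ueq equiv.
move=> r r' a a' t t' hr hr' ha ha' ht ht'; split.
  by move=> equiv; have [-> -> ->] := Ur_Phi_at_ueq_inj hr hr' ha ha' ht ht' equiv.
by case=> <- [<- <-]; exact: ueq_refl.
Qed.
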